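(* Let $p \in [0,1]$ and let $S(n,j) = \Pr[I_{n,p} \le j] = \sum_{i=0}^{j}\binom{n}{i}p^i(1-p)^{n-i}$, where $I_{n,p}$ is a binomial random variable with $n$ trials and success probability $p$. Fix an integer $k \ge 0$. Then for every $n \ge k$, $S(n+1, n+1-k) \ge S(n, n-k)$; that is, $S(n,n-k)$ is monotonically non-decreasing in $n$.
   Context: $S(n,j)$ is called the (upper) truncated binomial distribution. *)

From mathcomp Require Import all_boot all_order all_algebra.
Set Implicit Arguments. Unset Strict Implicit. Unset Printing Implicit Defensive.
Import Order.TTheory GRing.Theory Num.Theory.
Local Open Scope ring_scope.

Definition truncBin (R : realFieldType) (p : R) (n j : nat) : R :=
  \sum_(0 <= i < j.+1) ('C(n, i))%:R * p ^+ i * (1 - p) ^+ (n - i).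

From mathcomp Require Import all_boot all_order all_algebra.
From mathcomp Require Import ring.
Import Order.TTheory GRing.Theory Num.Theory.
Local Open Scope ring_scope.

(* Conditioning on the last trial gives Pascal's rule
   S(n+1, j+1) = S(n, j) + (1 - p) P[Bin(n, p) = j + 1],
   so the increment in question is a nonnegative binomial probability. *)

Definition binomial_term {R : comNzRingType} (p : R) (n i : nat) : R :=
  ('C(n, i))%:R * p ^+ i * (1 - p) ^+ (n - i).

Lemma binomial_termSS (R : comNzRingType) (p : R) (n i : nat) :
  binomial_term p n.+1 i.+1 =
  p * binomial_term p n i + (1 - p) * binomial_term p n i.+1.
Proof.
rewrite /binomial_term binS addnC natrD !mulrDl subSS.
congr (_ + _); first by rewrite exprS; ring.
have [lt_in | le_ni] := ltnP i n.
  by rewrite -(subnSK lt_in) !exprS; ring.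
by rewrite bin_small ?ltnS //; ring.
Qed.

Lemma binomial_termS0 (R : comNzRingType) (p : R) (n : nat) :
  binomial_term p n.+1 0 = (1 - p) * binomial_term p n 0.
Proof. by rewrite /binomial_term !bin0 !expr0 !subn0 exprS; ring. Qed.

Lemma binomial_term_ge0 (R : numDomainType) (p : R) (n i : nat) :
  0 <= p -> p <= 1 -> 0 <= binomial_term p n i.
Proof.
by move=> p_ge0 p_le1; rewrite !mulr_ge0 ?exprn_ge0 ?subr_ge0.
Qed.

Lemma truncBinE (R : realFieldType) (p : R) (n j : nat) :
  truncBin p n j = \sum_(0 <= i < j.+1) binomial_term p n i.
Proof. by []. Qed.

Lemma truncBinSS (R : realFieldType) (p : R) (n j : nat) :
  truncBin p n.+1 j.+1 = truncBin p n j + (1 - p) * binomial_term p n j.+1.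
Proof.
rewrite !truncBinE big_nat_recl // binomial_termS0.
under eq_bigr do rewrite binomial_termSS.
rewrite big_split /= -!mulr_sumr.
have shift : \sum_(0 <= i < j.+1) binomial_term p n i.+1 =
    \sum_(0 <= i < j.+1) binomial_term p n i + binomial_term p n j.+1
    - binomial_term p n 0.
  by rewrite -big_nat_recr //= [in RHS]big_nat_recl //; ring.
by rewrite shift; ring.
Qed.

Lemma truncBin_leSS (R : realFieldType) (p : R) (n j : nat) :
  0 <= p -> p <= 1 -> truncBin p n j <= truncBin p n.+1 j.+1.
Proof.
move=> p_ge0 p_le1; rewrite truncBinSS lerDl.
by rewrite mulr_ge0 ?subr_ge0 ?binomial_term_ge0.
Qed.

Theorem mainTheorem2 (R : realFieldType) (p : R) (k n : nat) :
  0 <= p -> p <= 1 -> (k <= n)%N ->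
  truncBin p n (n - k) <= truncBin p n.+1 (n.+1 - k).
Proof.
move=> p_ge0 p_le1 le_kn.
by rewrite subSn //; apply: truncBin_leSS.
Qed.
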